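(* Let $\gamma>0$ and $0<\alpha<1$. For $j\in\mathbb{Z}_{\ge0}$ let $F_j={}_2F_1(\gamma,j\gamma;1+j\gamma;\alpha)$, and define $$g(x)=\sum_{l=0}^{\infty}\frac{(-x)^l}{l!}\,\frac{1}{\prod_{j=0}^{l}F_j}.$$ Then $g$ is an entire function of $x$.
   Context: ${}_2F_1$ denotes the Gauss hypergeometric function. Note $F_0=1$. *)

From Stdlib Require Import Reals Arith.
From Coquelicot Require Import Coquelicot.
Open Scope R_scope.

Fixpoint poch (a : R) (n : nat) : R :=
  match n with
  | O => 1
  | S m => poch a m * (a + INR m)
  end.

Definition hyp2F1 (a b c z : R) : R :=
  Series (fun n => poch a n * poch b n / (poch c n * INR (Factorial.fact n)) * z ^ n).

Definition Fj (gamma alpha : R) (j : nat) : R :=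
  hyp2F1 gamma (INR j * gamma) (1 + INR j * gamma) alpha.

Fixpoint prodF (gamma alpha : R) (l : nat) : R :=
  match l with
  | O => Fj gamma alpha 0
  | S m => prodF gamma alpha m * Fj gamma alpha (S m)
  end.

Definition g_coef (gamma alpha : R) (l : nat) : R :=
  (-1) ^ l / (INR (Factorial.fact l) * prodF gamma alpha l).

(** Every term of the series defining [F_j] is nonnegative and the first
    one is [1], so [F_j >= 1]; the series converges because it is dominated
    termwise by the binomial series of [(1 - alpha)^(-gamma)]. Hence the
    ratio of consecutive Taylor coefficients of [g] is bounded by
    [1 / ((l + 1) F_(l+1)) <= 1 / (l + 1)], which tends to [0]. *)
From Stdlib Require Import Reals Lra.
From Coquelicot Require Import Coquelicot.
Open Scope R_scope.

Lemma poch_pos (a : R) (n : nat) : 0 < a -> 0 < poch a n.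
Proof.
  intros Ha; induction n as [|n IH]; simpl; [lra|].
  pose proof (pos_INR n); apply Rmult_lt_0_compat; lra.
Qed.

Lemma poch_le (a c : R) (n : nat) : 0 <= a <= c -> 0 <= poch a n <= poch c n.
Proof.
  intros Hac; induction n as [|n IH]; simpl; [lra|].
  pose proof (pos_INR n).
  split; [apply Rmult_le_pos | apply Rmult_le_compat]; lra.
Qed.

Lemma INR_fact_pos (n : nat) : 0 < INR (Factorial.fact n).
Proof. apply lt_0_INR, Factorial.lt_O_fact. Qed.

Lemma INR_fact_S (n : nat) :
  INR (Factorial.fact (S n)) = (INR n + 1) * INR (Factorial.fact n).
Proof.
  change (Factorial.fact (S n)) with (S n * Factorial.fact n)%nat.
  now rewrite mult_INR, S_INR.
Qed.

Lemma is_lim_seq_inv_INR_S : is_lim_seq (fun n => / (INR n + 1)) 0.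
Proof.
  change (Finite 0) with (Rbar_inv p_infty).
  apply is_lim_seq_inv; [|discriminate].
  eapply is_lim_seq_plus; [apply is_lim_seq_INR | apply is_lim_seq_const |].
  reflexivity.
Qed.

Lemma CV_radius_infinite_ratio_le_inv_S (a : nat -> R) :
  (forall n, a n <> 0) ->
  (forall n, Rabs (a (S n) / a n) <= / (INR n + 1)) ->
  CV_radius a = p_infty.
Proof.
  intros Ha Hratio; apply CV_radius_infinite_DAlembert; [exact Ha|].
  apply is_lim_seq_le_le with (fun _ => 0) (fun n => / (INR n + 1));
    [|apply is_lim_seq_const | apply is_lim_seq_inv_INR_S].
  intro n; split; [apply Rabs_pos | apply Hratio].
Qed.

Lemma Series_ge_head (t : nat -> R) :
  ex_series t -> (forall n, 0 <= t n) -> t 0%nat <= Series t.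
Proof.
  intros Hex Ht; rewrite Series_incr_1 by exact Hex.
  assert (Htail : 0 <= Series (fun k => t (S k))).
  { replace 0 with (Series (fun k => 0 * t (S k))) by (rewrite Series_scal_l; ring).
    apply Series_le; [intro n; rewrite Rmult_0_l; split; [lra | apply Ht]|].
    now apply (ex_series_incr_1 t). }
  lra.
Qed.

Definition binom_term (a z : R) (n : nat) : R :=
  poch a n / INR (Factorial.fact n) * z ^ n.

Lemma binom_term_pos (a z : R) (n : nat) : 0 < a -> 0 < z -> 0 < binom_term a z n.
Proof.
  intros Ha Hz; apply Rmult_lt_0_compat; [apply Rdiv_lt_0_compat | apply pow_lt];
    auto using poch_pos, INR_fact_pos.
Qed.

Lemma binom_term_ratio (a z : R) (n : nat) : 0 < a -> 0 < z ->
  binom_term a z (S n) / binom_term a z n = z * (1 + (a - 1) * / (INR n + 1)).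
Proof.
  intros Ha Hz; unfold binom_term; rewrite INR_fact_S; simpl poch; simpl pow.
  pose proof (poch_pos a n Ha); pose proof (INR_fact_pos n);
  pose proof (pos_INR n); pose proof (pow_lt z n Hz).
  field; repeat split; lra.
Qed.

Lemma ex_series_binom_term (a z : R) : 0 < a -> 0 < z < 1 ->
  ex_series (binom_term a z).
Proof.
  intros Ha Hz.
  apply ex_series_ext with (fun n => Rabs (binom_term a z n)).
  { intro n; apply Rabs_pos_eq, Rlt_le, binom_term_pos; lra. }
  apply ex_series_DAlembert with z; [lra | |].
  { intro n; apply Rgt_not_eq, binom_term_pos; lra. }
  apply is_lim_seq_ext with (fun n => z * (1 + (a - 1) * / (INR n + 1))).
  { intro n; rewrite binom_term_ratio by lra.
    rewrite Rabs_pos_eq; [reflexivity|].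
    rewrite <- binom_term_ratio by lra.
    apply Rlt_le, Rdiv_lt_0_compat; apply binom_term_pos; lra. }
  replace (Finite z) with (Rbar_mult z (1 + (a - 1) * 0)) by (simpl; f_equal; ring).
  apply is_lim_seq_scal_l, is_lim_seq_plus'; [apply is_lim_seq_const|].
  replace (Finite ((a - 1) * 0)) with (Rbar_mult (a - 1) 0) by (simpl; f_equal; ring).
  apply is_lim_seq_scal_l, is_lim_seq_inv_INR_S.
Qed.

Definition hyp2F1_term (a b c z : R) (n : nat) : R :=
  poch a n * poch b n / (poch c n * INR (Factorial.fact n)) * z ^ n.

Lemma hyp2F1_term_bounds (a b c z : R) (n : nat) :
  0 < a -> 0 <= b <= c -> 0 < c -> 0 < z ->
  0 <= hyp2F1_term a b c z n <= binom_term a z n.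
Proof.
  intros Ha Hbc Hc Hz.
  pose proof (poch_pos a n Ha); pose proof (poch_pos c n Hc);
  pose proof (poch_le b c n Hbc); pose proof (INR_fact_pos n);
  pose proof (pow_lt z n Hz).
  assert (Hsplit : hyp2F1_term a b c z n = binom_term a z n * (poch b n / poch c n)).
  { unfold hyp2F1_term, binom_term; field; lra. }
  assert (Hratio : 0 <= poch b n / poch c n <= 1).
  { split; [apply Rdiv_le_0_compat; lra|].
    apply (Rmult_le_reg_r (poch c n)); [lra|].
    unfold Rdiv; rewrite Rmult_assoc, Rinv_l; lra. }
  pose proof (binom_term_pos a z n Ha Hz).
  rewrite Hsplit; split; [apply Rmult_le_pos; lra|].
  rewrite <- (Rmult_1_r (binom_term a z n)) at 2.
  apply Rmult_le_compat_l; lra.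
Qed.

Lemma hyp2F1_ge_1 (a b c z : R) :
  0 < a -> 0 <= b <= c -> 0 < c -> 0 < z < 1 -> 1 <= hyp2F1 a b c z.
Proof.
  intros Ha Hbc Hc Hz.
  pose proof (fun n => hyp2F1_term_bounds a b c z n Ha Hbc Hc (proj1 Hz)) as Hbound.
  assert (Hex : ex_series (hyp2F1_term a b c z)).
  { apply (ex_series_le (K := R_AbsRing) (V := R_CompleteNormedModule)
      _ (binom_term a z)); [|now apply ex_series_binom_term].
    intro n; change norm with Rabs; simpl.
    rewrite Rabs_pos_eq; apply Hbound. }
  replace 1 with (hyp2F1_term a b c z 0) by (unfold hyp2F1_term; simpl; field).
  apply Series_ge_head; [exact Hex | apply Hbound].
Qed.

Section Coefficients.

Variables gamma alpha : R.
Hypothesis hg : 0 < gamma.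
Hypotheses (ha0 : 0 < alpha) (ha1 : alpha < 1).

Lemma Fj_ge_1 (j : nat) : 1 <= Fj gamma alpha j.
Proof.
  pose proof (pos_INR j).
  assert (0 <= INR j * gamma) by (apply Rmult_le_pos; lra).
  apply hyp2F1_ge_1; lra.
Qed.

Lemma prodF_pos (l : nat) : 0 < prodF gamma alpha l.
Proof.
  induction l as [|l IH]; simpl.
  - pose proof (Fj_ge_1 0); lra.
  - pose proof (Fj_ge_1 (S l)); apply Rmult_lt_0_compat; lra.
Qed.

Lemma g_coef_neq_0 (l : nat) : g_coef gamma alpha l <> 0.
Proof.
  pose proof (prodF_pos l); pose proof (INR_fact_pos l).
  apply Rmult_integral_contrapositive_currified; [apply pow_nonzero; lra|].
  apply Rinv_neq_0_compat, Rgt_not_eq, Rmult_lt_0_compat; lra.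
Qed.

Lemma g_coef_ratio (l : nat) :
  g_coef gamma alpha (S l) / g_coef gamma alpha l
  = - / ((INR l + 1) * Fj gamma alpha (S l)).
Proof.
  unfold g_coef; simpl prodF; rewrite INR_fact_S.
  pose proof (prodF_pos l); pose proof (INR_fact_pos l);
  pose proof (pos_INR l); pose proof (Fj_ge_1 (S l)).
  assert ((-1) ^ l <> 0) by (apply pow_nonzero; lra).
  simpl pow; field; repeat split; lra.
Qed.

Lemma g_coef_ratio_le (l : nat) :
  Rabs (g_coef gamma alpha (S l) / g_coef gamma alpha l) <= / (INR l + 1).
Proof.
  pose proof (pos_INR l); pose proof (Fj_ge_1 (S l)).
  rewrite g_coef_ratio, Rabs_Ropp, Rabs_pos_eq
    by (apply Rlt_le, Rinv_0_lt_compat, Rmult_lt_0_compat; lra).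
  apply Rinv_le_contravar; [lra|].
  rewrite <- (Rmult_1_r (INR l + 1)) at 1; apply Rmult_le_compat_l; lra.
Qed.

End Coefficients.

Theorem mainTheorem7 (gamma alpha : R) (hg : 0 < gamma) (ha0 : 0 < alpha) (ha1 : alpha < 1) :
  CV_radius (g_coef gamma alpha) = p_infty.
Proof.
  apply CV_radius_infinite_ratio_le_inv_S.
  - exact (g_coef_neq_0 gamma alpha hg ha0 ha1).
  - exact (g_coef_ratio_le gamma alpha hg ha0 ha1).
Qed.
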